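(* Let $(\mu_z^\varepsilon)_{z\in V,\varepsilon\in[0,1]}$ be a time-affine random walk on $\mathcal G$. Then for every pair of distinct vertices $x,y$, the function $\varepsilon\mapsto {}^{\mathcal O}\mathrm{Ric}_\varepsilon(x,y)$ is concave on $[0,1]$.
   Context: $\mathcal G$ is a locally finite graph with vertex set $V$, and $\mathrm d$ is a distance on $V$ such that $(V,\mathrm d)$ is a complete metric space. A random walk is a family of probability measures $\mu_z^\varepsilon$ on $V$ ($z\in V$, $\varepsilon\in[0,1]$), each with finite first moment, continuous in $\varepsilon$, with $\mu_z^0=\delta_z$. It is time-affine if for all $x,y\in V$ the function $\varepsilon\mapsto\mu_x^\varepsilon(y)$ is affine. $\mathcal W_1$ denotes the $L^1$-Wasserstein distance with respect to $\mathrm d$: $\mathcal W_1(\mu,\nu)=\inf_q\sum_{u,v}\mathrm d(u,v)q(u,v)$ over couplings $q$ of $\mu,\nu$. The discrete-time Ollivier–Ricci curvature is ${}^{\mathcal O}\mathrm{Ric}_\varepsilon(x,y):=1-\mathcal W_1(\mu_x^\varepsilon,\mu_y^\varepsilon)/\mathrm d(x,y)$. *)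

From HB Require Import structures.
From mathcomp Require Import all_boot all_order all_algebra.
From mathcomp Require Import all_classical all_reals.
From mathcomp Require Import ereal topology normedtype sequences esum.
Set Implicit Arguments. Unset Strict Implicit. Unset Printing Implicit Defensive.
Import Order.TTheory GRing.Theory Num.Theory.
Import numFieldNormedType.Exports.
Local Open Scope classical_set_scope.
Local Open Scope ring_scope.

Definition locally_finite_graph (V : choiceType) (adj : V -> V -> Prop) : Prop :=
  (forall x y, adj x y -> adj y x) /\ (forall x, ~ adj x x) /\
  (forall x, finite_set [set y | adj x y]).

Definition is_distance (R : realType) (V : choiceType) (d : V -> V -> R) : Prop :=
  (forall x y, 0 <= d x y) /\ (forall x y, d x y = 0 <-> x = y) /\
  (forall x y, d x y = d y x) /\ (forall x y z, d x z <= d x y + d y z).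

Definition complete_distance (R : realType) (V : choiceType) (d : V -> V -> R) : Prop :=
  forall u : nat -> V,
    (forall e : R, 0 < e -> exists N : nat, forall m n, (N <= m)%N -> (N <= n)%N ->
        d (u m) (u n) < e) ->
    exists l : V, forall e : R, 0 < e -> exists N : nat, forall n, (N <= n)%N ->
        d (u n) l < e.

Definition is_prob (R : realType) (V : choiceType) (p : V -> R) : Prop :=
  (forall v, 0 <= p v) /\ (\esum_(v in [set: V]) (p v)%:E = 1%E).

Definition finite_first_moment (R : realType) (V : choiceType) (d : V -> V -> R)
    (p : V -> R) : Prop :=
  forall z0 : V, (\esum_(v in [set: V]) (d z0 v * p v)%:E < +oo)%E.

Definition dirac_mass (R : realType) (V : choiceType) (z : V) : V -> R :=
  fun v => if asbool (v = z) then 1 else 0.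

Definition is_coupling (R : realType) (V : choiceType) (p q : V -> R) (c : V * V -> R) : Prop :=
  (forall w, 0 <= c w) /\
  (forall u, \esum_(v in [set: V]) (c (u, v))%:E = (p u)%:E) /\
  (forall v, \esum_(u in [set: V]) (c (u, v))%:E = (q v)%:E).

Definition W1 (R : realType) (V : choiceType) (d : V -> V -> R) (p q : V -> R) : \bar R :=
  ereal_inf [set (\esum_(w in [set: V * V]) (d w.1 w.2 * c w)%:E)%E
            | c in [set c | is_coupling p q c]].

(* A random walk: mu z eps is the measure mu_z^eps, eps in [0,1]. *)
Definition is_random_walk (R : realType) (V : choiceType) (d : V -> V -> R)
    (mu : V -> R -> V -> R) : Prop :=
  (forall z eps, 0 <= eps <= 1 -> is_prob (mu z eps) /\ finite_first_moment d (mu z eps)) /\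
  (forall z y, {within `[0, 1]%classic, continuous (fun eps : R => mu z eps y)}) /\
  (forall z, mu z 0 = dirac_mass R z).

Definition time_affine (R : realType) (V : choiceType) (mu : V -> R -> V -> R) : Prop :=
  forall x y, exists a b : R, forall eps, 0 <= eps <= 1 -> mu x eps y = a + b * eps.

Definition ORic (R : realType) (V : choiceType) (d : V -> V -> R) (mu : V -> R -> V -> R)
    (eps : R) (x y : V) : R :=
  1 - fine (W1 d (mu x eps) (mu y eps)) / d x y.

From HB Require Import structures.
From mathcomp Require Import all_boot all_order all_algebra.
From mathcomp Require Import all_classical all_reals.
From mathcomp Require Import ereal topology normedtype sequences esum.
From mathcomp Require Import ring lra.
Import Order.TTheory GRing.Theory Num.Theory.
Import numFieldNormedType.Exports.
Set Implicit Arguments. Unset Strict Implicit.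
Local Open Scope ring_scope.

(* Time-affinity makes mu_z at a convex combination of times the same convex
   combination of the measures mu_z at those times.  Mixing couplings of the
   endpoint measures gives a coupling of the mixtures whose cost is the mixture
   of the costs, so W1 is jointly convex; hence eps |-> W1(mu_x^eps, mu_y^eps)
   is convex and 1 - W1/d(x,y) is concave.  Finite first moments make all the
   transport costs involved finite, through the product coupling. *)

Definition mix (R : pzRingType) (T : Type) (t : R) (f g : T -> R) : T -> R :=
  fun v => (1 - t) * f v + t * g v.

Lemma mix_itv01 (R : realDomainType) (t a b : R) :
  0 <= t <= 1 -> 0 <= a <= 1 -> 0 <= b <= 1 -> 0 <= (1 - t) * a + t * b <= 1.
Proof. by move=> /andP[? ?] /andP[? ?] /andP[? ?]; apply/andP; split; nra. Qed.

Section ExtendedSums.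
Local Open Scope classical_set_scope.
Local Open Scope ereal_scope.
Variables (R : realType) (T : choiceType).
Implicit Types (f g : T -> R) (k t : R).

Lemma ge0_esumZl (S : set T) (a : T -> \bar R) k :
  (0 <= k)%R -> (forall i, 0 <= a i) ->
  \esum_(i in S) (k%:E * a i) = k%:E * \esum_(i in S) a i.
Proof.
move=> k0 a0; rewrite /esum -ereal_supZl //; last first.
  by apply/set0P; exists 0, set0; [exact: fsets_set0 | rewrite fsbig_set0].
congr ereal_sup; apply/seteqP; split => z /=.
- case=> A FA <-; exists (\sum_(i \in A) a i); first by exists A.
  by rewrite ge0_mule_fsumr.
- by case=> _ [A FA <-] <-; exists A => //; rewrite ge0_mule_fsumr.
Qed.

Lemma esum_mix (S : set T) t f g :
  (0 <= t <= 1)%R -> (forall i, 0 <= f i)%R -> (forall i, 0 <= g i)%R ->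
  \esum_(i in S) (mix t f g i)%:E =
  (1 - t)%:E * (\esum_(i in S) (f i)%:E) + t%:E * (\esum_(i in S) (g i)%:E).
Proof.
move=> /andP[t0 t1] f0 g0; have t0' : (0 <= 1 - t)%R by rewrite subr_ge0.
rewrite /mix; under eq_esum do rewrite EFinD !EFinM.
rewrite esumD => [|i _|i _]; last 2 first.
- by rewrite mule_ge0 ?lee_fin.
- by rewrite mule_ge0 ?lee_fin.
by rewrite (ge0_esumZl _ t0') ?(ge0_esumZl _ t0).
Qed.

Lemma esum_prod_mul f g (b : R) :
  (forall u, 0 <= f u)%R -> (forall v, 0 <= g v)%R ->
  \esum_(v in [set: T]) (g v)%:E = b%:E ->
  \esum_(w in [set: T * T]) (f w.1 * g w.2)%:E = b%:E * \esum_(u in [set: T]) (f u)%:E.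
Proof.
move=> f0 g0 gb.
have -> : [set: T * T] = [set: T] `*`` (fun=> [set: T]) by apply/seteqP.
rewrite -(esum_esum (a := fun u v => (f u * g v)%:E)); last first.
  by move=> u v _ _; rewrite lee_fin mulr_ge0.
have b0 : (0 <= b)%R by rewrite -lee_fin -gb esum_ge0 // => v _; rewrite lee_fin.
rewrite -ge0_esumZl //.
apply: eq_esum => u _; under eq_esum do rewrite EFinM.
by rewrite ge0_esumZl ?gb 1?muleC.
Qed.

End ExtendedSums.

Section Wasserstein.
Local Open Scope ereal_scope.
Variables (R : realType) (V : choiceType) (d : V -> V -> R).
Hypothesis d_ge0 : forall x y, (0 <= d x y)%R.
Implicit Types (p q : V -> R) (c : V * V -> R) (t : R).

Definition cost c : \bar R := \esum_(w in [set: V * V]) (d w.1 w.2 * c w)%:E.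

Definition prod_coupling p q : V * V -> R := fun w => (p w.1 * q w.2)%R.

Lemma cost_ge0 c : (forall w, 0 <= c w)%R -> 0 <= cost c.
Proof. by move=> c0; apply: esum_ge0 => w _; rewrite lee_fin mulr_ge0. Qed.

Lemma W1_le_cost p q c : is_coupling p q c -> W1 d p q <= cost c.
Proof. by move=> pqc; apply: ereal_inf_lbound; exists c. Qed.

Lemma W1_ge0 p q : 0 <= W1 d p q.
Proof. by apply: le_ereal_inf_tmp => _ [c [c0 _] <-]; apply: cost_ge0. Qed.

Lemma cost_mix t c1 c2 :
  (0 <= t <= 1)%R -> (forall w, 0 <= c1 w)%R -> (forall w, 0 <= c2 w)%R ->
  cost (mix t c1 c2) = (1 - t)%:E * cost c1 + t%:E * cost c2.
Proof.
move=> t01 c10 c20; rewrite /cost -esum_mix // => [|w|w]; last 2 first.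
- exact: mulr_ge0.
- exact: mulr_ge0.
by apply: eq_esum => w _; rewrite /mix; congr (_%:E); ring.
Qed.

Lemma is_coupling_mix t p1 q1 p2 q2 c1 c2 :
  (0 <= t <= 1)%R -> is_coupling p1 q1 c1 -> is_coupling p2 q2 c2 ->
  is_coupling (mix t p1 p2) (mix t q1 q2) (mix t c1 c2).
Proof.
move=> t01 [c10 [c1l c1r]] [c20 [c2l c2r]]; have /andP[t0 t1] := t01.
split; [|split].
- by move=> w; rewrite /mix addr_ge0 ?mulr_ge0 ?subr_ge0.
- move=> u; rewrite (esum_mix _ (f := fun v => c1 (u, v)) (g := fun v => c2 (u, v))) //.
  by rewrite c1l c2l -!EFinM -EFinD.
- move=> v; rewrite (esum_mix _ (f := fun u => c1 (u, v)) (g := fun u => c2 (u, v))) //.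
  by rewrite c1r c2r -!EFinM -EFinD.
Qed.

Lemma is_coupling_prod p q : is_prob p -> is_prob q -> is_coupling p q (prod_coupling p q).
Proof.
move=> [p0 p1] [q0 q1]; rewrite /prod_coupling; split; [|split] => [w|u|v] /=.
- exact: mulr_ge0.
- by under eq_esum do rewrite EFinM; rewrite ge0_esumZl ?q1 ?mule1.
- by under eq_esum do rewrite EFinM muleC; rewrite ge0_esumZl ?p1 ?mule1.
Qed.

Lemma cost_prod_lty (x : V) p q :
  (forall y z, d y z = d z y) -> (forall y z w, (d y w <= d y z + d z w)%R) ->
  is_prob p -> is_prob q ->
  finite_first_moment d p -> finite_first_moment d q ->
  cost (prod_coupling p q) < +oo.
Proof.
move=> dC dD [p0 p1] [q0 q1] /(_ x) Mp /(_ x) Mq.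
have dq0 v : (0 <= d x v * q v)%R by rewrite mulr_ge0.
have [m Em] : exists m, \esum_(v in [set: V]) (d x v * q v)%:E = m%:E.
  exists (fine (\esum_(v in [set: V]) (d x v * q v)%:E)).
  by rewrite fineK // ge0_fin_numE // esum_ge0 // => v _; rewrite lee_fin.
apply: (@le_lt_trans _ _ (\esum_(w in [set: V * V]) ((d x w.1 * p w.1) * q w.2)%:E
    + \esum_(w in [set: V * V]) (p w.1 * (d x w.2 * q w.2))%:E)).
  rewrite -esumD => [|w _|w _]; rewrite ?lee_fin ?mulr_ge0 //.
  apply: le_esum => w _; rewrite -EFinD lee_fin /prod_coupling.
  have tri : (d w.1 w.2 <= d x w.1 + d x w.2)%R by rewrite -(dC w.1 x) dD.
  by rewrite -mulrA (mulrCA (p w.1)) -mulrDl ler_wpM2r ?mulr_ge0.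
rewrite (@esum_prod_mul _ _ (fun u => d x u * p u)%R q 1) //; last first.
  by move=> u; exact: mulr_ge0.
by rewrite (esum_prod_mul _ _ Em) // p1 mul1e mule1 lte_add_pinfty ?ltry.
Qed.

Lemma W1_fin_num (x : V) p q :
  (forall y z, d y z = d z y) -> (forall y z w, (d y w <= d y z + d z w)%R) ->
  is_prob p -> is_prob q ->
  finite_first_moment d p -> finite_first_moment d q ->
  W1 d p q \is a fin_num.
Proof.
move=> dC dD pp qq Mp Mq; rewrite ge0_fin_numE ?W1_ge0 //.
exact: le_lt_trans (W1_le_cost (is_coupling_prod pp qq)) (cost_prod_lty x dC dD pp qq Mp Mq).
Qed.

Lemma W1_near_coupling p q (e : R) : (0 < e)%R -> W1 d p q \is a fin_num ->
  exists2 c, is_coupling p q c &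
    cost c \is a fin_num /\ (fine (cost c) < fine (W1 d p q) + e)%R.
Proof.
move=> e0 fW; have [_ [c pqc <-] ltc] := lb_ereal_inf_adherent e0 fW.
rewrite -/(W1 d p q) -/(cost c) in ltc.
have fc : cost c \is a fin_num.
  rewrite ge0_fin_numE; last exact: cost_ge0 pqc.1.
  by apply: lt_trans ltc _; rewrite -(fineK fW) ltry.
exists c => //; split => //.
by rewrite -lte_fin (fineK fc) EFinD (fineK fW).
Qed.

Lemma W1_mix_le t p1 q1 p2 q2 :
  (0 <= t <= 1)%R -> W1 d p1 q1 \is a fin_num -> W1 d p2 q2 \is a fin_num ->
  W1 d (mix t p1 p2) (mix t q1 q2)
    <= ((1 - t) * fine (W1 d p1 q1) + t * fine (W1 d p2 q2))%:E.
Proof.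
move=> t01 f1 f2; apply/lee_addgt0Pr => e e0.
have [c1 pqc1 [fc1 lt1]] := W1_near_coupling e0 f1.
have [c2 pqc2 [fc2 lt2]] := W1_near_coupling e0 f2.
apply: le_trans (W1_le_cost (is_coupling_mix t01 pqc1 pqc2)) _.
rewrite cost_mix //; [|exact: pqc1.1|exact: pqc2.1].
rewrite -(fineK fc1) -(fineK fc2) -!EFinM -!EFinD lee_fin.
by move: t01 => /andP[t0 t1]; nra.
Qed.

End Wasserstein.

Section RandomWalk.
Variables (R : realType) (V : choiceType) (d : V -> V -> R) (mu : V -> R -> V -> R).

Lemma time_affine_mix z (e1 e2 t : R) :
  time_affine mu -> 0 <= e1 <= 1 -> 0 <= e2 <= 1 -> 0 <= t <= 1 ->
  mu z ((1 - t) * e1 + t * e2) = mix t (mu z e1) (mu z e2).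
Proof.
move=> affine e1i e2i ti; apply: funext => v; have [a [b ab]] := affine z v.
by rewrite /mix !ab ?mix_itv01 //; ring.
Qed.

Lemma walk_W1_fin_num x y (eps : R) :
  is_distance d -> is_random_walk d mu -> 0 <= eps <= 1 ->
  W1 d (mu x eps) (mu y eps) \is a fin_num.
Proof.
move=> [d0 [_ [dC dD]]] [walk _] epsi.
have [px Mx] := walk x eps epsi; have [py My] := walk y eps epsi.
by apply: (W1_fin_num d0 x).
Qed.

Lemma walk_W1_convex x y (e1 e2 t : R) :
  is_distance d -> is_random_walk d mu -> time_affine mu ->
  0 <= e1 <= 1 -> 0 <= e2 <= 1 -> 0 <= t <= 1 ->
  fine (W1 d (mu x ((1 - t) * e1 + t * e2)) (mu y ((1 - t) * e1 + t * e2)))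
    <= (1 - t) * fine (W1 d (mu x e1) (mu y e1)) + t * fine (W1 d (mu x e2) (mu y e2)).
Proof.
move=> dd walk affine e1i e2i ti.
have fm := walk_W1_fin_num x y dd walk (mix_itv01 ti e1i e2i).
rewrite -lee_fin (fineK fm) !(time_affine_mix _ affine e1i e2i ti).
by have [d0 _] := dd; apply: (W1_mix_le d0 ti); apply: walk_W1_fin_num.
Qed.

End RandomWalk.

Theorem mainTheorem4 (R : realType) (V : choiceType) (adj : V -> V -> Prop)
  (d : V -> V -> R) (mu : V -> R -> V -> R) :
  locally_finite_graph adj ->
  is_distance d -> complete_distance d ->
  is_random_walk d mu -> time_affine mu ->
  forall x y : V, x <> y ->
  forall e1 e2 t : R, 0 <= e1 <= 1 -> 0 <= e2 <= 1 -> 0 <= t <= 1 ->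
    (1 - t) * ORic d mu e1 x y + t * ORic d mu e2 x y
      <= ORic d mu ((1 - t) * e1 + t * e2) x y.
Proof.
move=> _ dd _ walk affine x y xy e1 e2 t e1i e2i ti.
have dxy0 : 0 < d x y.
  have [d0 [d0P _]] := dd; rewrite lt_def d0 andbT.
  by apply/eqP => /d0P.
have := walk_W1_convex x y dd walk affine e1i e2i ti.
rewrite /ORic; set w := fine _; set w1 := fine _; set w2 := fine _ => conv.
rewrite -subr_ge0.
have -> : 1 - w / d x y - ((1 - t) * (1 - w1 / d x y) + t * (1 - w2 / d x y))
    = ((1 - t) * w1 + t * w2 - w) / d x y by field; rewrite gt_eqF.
by rewrite divr_ge0 ?subr_ge0 ?(ltW dxy0).
Qed.
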